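(* Let $M$ be a graded finitely generated faithful graded multiplication $R$-module and $U$ a proper graded submodule of $M$, and assume $J_{gr}(M)=J_{gr}(R)M$. The following are equivalent: (i) $U$ is a graded weakly $J_{gr}$-semiprime submodule of $M$; (ii) $(U:_RM)$ is a graded weakly $J_{gr}$-semiprime ideal of $R$; (iii) $U=LM$ for some graded weakly $J_{gr}$-semiprime ideal $L$ of $R$.
   Context: Standing conventions: $\Gamma$ is a group, $R=\bigoplus_{g\in\Gamma}R_g$ is a commutative $\Gamma$-graded ring with identity, and $M=\bigoplus_{g\in\Gamma}M_g$ is a unitary $\Gamma$-graded $R$-module. $h(R)$, $h(M)$ are the homogeneous elements. A submodule $U$ is graded if $U=\bigoplus_g(U\cap M_g)$. $M$ is graded finitely generated if $M=Ra_1+\dots+Ra_n$ with $a_i\in h(M)$; graded multiplication if every graded submodule equals $KM$ for some graded ideal $K$ of $R$; faithful if $\mathrm{ann}_R(M)=0$. $(U:_RM)=\{r\in R: rM\subseteq U\}$. For a graded module $N$, a graded submodule $U\neq N$ is Gr-maximal if every graded submodule between $U$ and $N$ equals $U$ or $N$; $J_{gr}(N)$ is the intersection of all Gr-maximal submodules of $N$ ($=N$ if none); $J_{gr}(R)$ is this for $N=R$. A proper graded submodule $U$ of $M$ is graded weakly $J_{gr}$-semiprime if whenever $r_g\in h(R)$, $m_h\in h(M)$, $n\in\mathbb{Z}^+$ and $0\neq r_g^nm_h\in U$, then $r_gm_h\in U+J_{gr}(M)$; a graded ideal of $R$ is graded weakly $J_{gr}$-semiprime if it is so as a (proper) submodule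 of the graded $R$-module $R$. *)

From HB Require Import structures.
From mathcomp Require Import all_boot all_algebra.
Set Implicit Arguments. Unset Strict Implicit. Unset Printing Implicit Defensive.
Import GRing.Theory.
Local Open Scope ring_scope.

Section GradedDefs.

Variable G : eqType.
Variable op : G -> G -> G.

Definition is_group (e : G) (inv : G -> G) : Prop :=
  [/\ forall a b c, op a (op b c) = op (op a b) c,
      forall a, op e a = a /\ op a e = a
    & forall a, op (inv a) a = e /\ op a (inv a) = e].

Definition is_grading (V : zmodType) (VG : G -> V -> Prop) : Prop :=
  [/\
      forall g, VG g 0,
      forall g x y, VG g x -> VG g y -> VG g (x - y),
      forall x : V, exists (s : seq G) (a : G -> V),
          uniq s /\ (forall g, g \in s -> VG g (a g)) /\ x = \sum_(g <- s) a g
    &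
      forall (s : seq G) (a : G -> V), uniq s ->
          (forall g, g \in s -> VG g (a g)) ->
          \sum_(g <- s) a g = 0 -> forall g, g \in s -> a g = 0 ].

Variable R : comNzRingType.
Variable RG : G -> R -> Prop.

Definition graded_ring : Prop :=
  is_grading RG /\
  forall g h (x y : R), RG g x -> RG h y -> RG (op g h) (x * y).

Definition graded_module (M : lmodType R) (MG : G -> M -> Prop) : Prop :=
  is_grading MG /\
  forall g h (r : R) (m : M), RG g r -> MG h m -> MG (op g h) (r *: m).

Definition homogR (r : R) : Prop := exists g, RG g r.

Section OverModule.
Variable M : lmodType R.
Variable MG : G -> M -> Prop.

Definition homog (x : M) : Prop := exists g, MG g x.

Definition submodule (U : M -> Prop) : Prop :=
  [/\ U 0, forall x y, U x -> U y -> U (x + y)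
    & forall (r : R) x, U x -> U (r *: x)].

Definition graded_submodule (U : M -> Prop) : Prop :=
  submodule U /\
  forall x, U x -> exists (s : seq G) (a : G -> M),
     uniq s /\ (forall g, g \in s -> MG g (a g) /\ U (a g)) /\
     x = \sum_(g <- s) a g.

Definition gr_proper (U : M -> Prop) : Prop := exists x, ~ U x.

Definition gr_maximal (U : M -> Prop) : Prop :=
  [/\ graded_submodule U, gr_proper U &
      forall W, graded_submodule W -> (forall x, U x -> W x) ->
        (forall x, W x <-> U x) \/ (forall x, W x)].

(* J_gr(M): intersection of all Gr-maximal submodules (= M if none) *)
Definition Jgr (x : M) : Prop := forall U, gr_maximal U -> U x.

Definition gr_weakly_Jsemiprime (U : M -> Prop) : Prop :=
  [/\ graded_submodule U, gr_proper U &
      forall (r : R) (m : M) (n : nat), homogR r -> homog m -> (0 < n)%N ->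
        r ^+ n *: m != 0 -> U (r ^+ n *: m) ->
        exists u j, U u /\ Jgr j /\ r *: m = u + j].

Definition colon (U : M -> Prop) : R -> Prop := fun r => forall m : M, U (r *: m).

Definition idealM (K : R -> Prop) : M -> Prop :=
  fun x => exists (n : nat) (r : 'I_n -> R) (m : 'I_n -> M),
     (forall i, K (r i)) /\ x = \sum_(i < n) r i *: m i.

Definition gr_fin_gen : Prop :=
  exists (n : nat) (a : 'I_n -> M), (forall i, homog (a i)) /\
    forall x : M, exists c : 'I_n -> R, x = \sum_(i < n) c i *: a i.

Definition faithful : Prop := forall r : R, (forall m : M, r *: m = 0) -> r = 0.

End OverModule.

Definition graded_ideal (K : R -> Prop) : Prop :=
  @graded_submodule R^o RG K.

Definition gr_multiplication (M : lmodType R) (MG : G -> M -> Prop) : Prop :=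
  forall U, graded_submodule MG U ->
    exists K, graded_ideal K /\ forall x, U x <-> idealM K x.

(* J_gr(R) and graded weakly J_gr-semiprime ideals: R viewed as the graded
   R-module R (R^o, with r *: x = r * x) *)
Definition JgrR : R -> Prop := @Jgr R^o RG.
Definition gr_weakly_Jsemiprime_ideal (K : R -> Prop) : Prop :=
  @gr_weakly_Jsemiprime R^o RG K.

End GradedDefs.

From mathcomp Require Import all_boot all_algebra ring.
From mathcomp Require Import boolp classical_sets.
Set Implicit Arguments. Unset Strict Implicit. Unset Printing Implicit Defensive.
Import GRing.Theory.
Local Open Scope ring_scope.

(* The heart of the argument is the cancellation law
       x M <= K M  ==>  x in K          (K any ideal of R),
   proved by the classical El-Bast--Smith argument: a maximal ideal Q above
   (K : x) yields a contradiction either by a determinant-trick Nakayama lemma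
   (if M = Q M) or through a homogeneous m outside Q M (using R m = K' M).
   Cancellation gives (K M :_R M) = K, and together with the hypothesis
   J_gr(M) = J_gr(R) M it transports the weakly J_gr-semiprime condition
   between K and K M in both directions; the case r^n m = 0 excluded by
   "weakly" is handled by the fact that t m lies in every Gr-maximal
   submodule when t^n m = 0 (t, m homogeneous).  The three equivalences of
   the theorem are then immediate with K := (U :_R M). *)

Definition ideal (R : comNzRingType) (K : R -> Prop) :=
  [/\ K 0, forall x y, K x -> K y -> K (x + y) & forall r x, K x -> K (r * x)].

Definition plus_set (V : zmodType) (A B : V -> Prop) : V -> Prop :=
  fun y => exists u j, A u /\ B j /\ y = u + j.

Section Submodules.
Variables (R : comNzRingType) (M : lmodType R).

Lemma submod_sum (U : M -> Prop) (I : Type) (s : seq I) (P : pred I)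
    (F : I -> M) :
  submodule U -> (forall i, P i -> U (F i)) -> U (\sum_(i <- s | P i) F i).
Proof.
case=> U0 UD _ UF; elim/big_rec: _ => // i x Pi Ux; exact: UD (UF i Pi) Ux.
Qed.

Lemma plus_submodule (A B : M -> Prop) :
  submodule A -> submodule B -> submodule (plus_set A B).
Proof.
case=> A0 AD AZ [B0 BD BZ]; split.
- by exists 0, 0; rewrite addr0.
- move=> _ _ [u [j [Au [Bj ->]]]] [u' [j' [Au' [Bj' ->]]]].
  by exists (u + u'), (j + j'); rewrite addrACA; split; [apply: AD | split; [apply: BD|]].
- move=> c _ [u [j [Au [Bj ->]]]]; exists (c *: u), (c *: j).
  by rewrite scalerDr; split; [apply: AZ | split; [apply: BZ|]].
Qed.

Definition cyclic (a : M) : M -> Prop := fun y => exists c, y = c *: a.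

Lemma cyclic_submodule (a : M) : submodule (cyclic a).
Proof.
split.
- by exists 0; rewrite scale0r.
- by move=> _ _ [c ->] [d ->]; exists (c + d); rewrite scalerDl.
- by move=> r _ [c ->]; exists (r * c); rewrite scalerA.
Qed.

Lemma idealM_submodule (K : R -> Prop) : submodule (idealM (M:=M) K).
Proof.
split.
- by exists 0%N, (fun _ => 0), (fun _ => 0); split; [case | rewrite big_ord0].
- move=> _ _ [n [r [m [Kr ->]]]] [n' [r' [m' [Kr' ->]]]].
  exists (n + n')%N, (fun i => match split i with inl j => r j | inr j => r' j end),
     (fun i => match split i with inl j => m j | inr j => m' j end); split.
    by move=> i; case: (split i).
  rewrite big_split_ord /=; congr (_ + _); apply: eq_bigr => i _.
    by rewrite (unsplitK (inl i : 'I_n + 'I_n')).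
  by rewrite (unsplitK (inr i : 'I_n + 'I_n')).
- move=> c _ [n [r [m [Kr ->]]]]; exists n, r, (fun i => c *: m i); split => //.
  by rewrite scaler_sumr; apply: eq_bigr => i _; rewrite !scalerA mulrC.
Qed.

Lemma idealM1 (K : R -> Prop) (r : R) (m : M) : K r -> idealM K (r *: m).
Proof. by move=> Kr; exists 1%N, (fun _ => r), (fun _ => m); rewrite big_ord1. Qed.

Lemma idealM_mono (K K' : R -> Prop) (x : M) :
  (forall r, K r -> K' r) -> idealM K x -> idealM K' x.
Proof. by move=> KK' [n [r [m [Kr ->]]]]; exists n, r, m; split => // i; apply: KK'. Qed.

Lemma idealM_ext (K K' : R -> Prop) (x : M) :
  (forall r, K r <-> K' r) -> idealM K x <-> idealM K' x.
Proof. by move=> E; split; apply: idealM_mono => r /E. Qed.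

Lemma idealM_least (K : R -> Prop) (U : M -> Prop) (x : M) :
  submodule U -> (forall r m, K r -> U (r *: m)) -> idealM K x -> U x.
Proof. by move=> HU KU [n [r [m [Kr ->]]]]; apply: submod_sum => // i _; apply: KU. Qed.

Lemma idealM_plus (A B : R -> Prop) (x : M) :
  A 0 -> B 0 -> plus_set (idealM A) (idealM B) x -> idealM (plus_set A B) x.
Proof.
move=> A0 B0 [u [j [Au [Bj ->]]]]; case: (idealM_submodule (plus_set A B)) => _ HD _.
apply: HD; [move: Au | move: Bj]; apply: idealM_mono => r Hr.
  by exists r, 0; rewrite addr0.
by exists 0, r; rewrite add0r.
Qed.

Lemma Jgr_submodule (G : eqType) (MG : G -> M -> Prop) : submodule (Jgr MG).
Proof.
split.
- by move=> U [[[U0 _ _] _] _ _].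
- by move=> x y Jx Jy U HU; case: (HU) => [[[_ UD _] _] _ _]; apply: UD; [apply: Jx|apply: Jy].
- by move=> r x Jx U HU; case: (HU) => [[[_ _ UZ] _] _ _]; apply: UZ; apply: Jx.
Qed.

End Submodules.

Lemma ideal_submoduleE (R : comNzRingType) (K : R -> Prop) :
  ideal K <-> @submodule R R^o K.
Proof. by split; case. Qed.

Lemma ideal_sum (R : comNzRingType) (K : R -> Prop) (I : Type) (s : seq I)
    (P : pred I) (F : I -> R) :
  ideal K -> (forall i, P i -> K (F i)) -> K (\sum_(i <- s | P i) F i).
Proof. by move/ideal_submoduleE => HK; apply: (@submod_sum R R^o). Qed.

Lemma ideal_mulr (R : comNzRingType) (K : R -> Prop) (x r : R) :
  ideal K -> K x -> K (x * r).
Proof. by case=> _ _ KM Kx; rewrite mulrC; apply: KM. Qed.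

Lemma grading_add (G : eqType) (V : zmodType) (VG : G -> V -> Prop) g x y :
  is_grading VG -> VG g x -> VG g y -> VG g (x + y).
Proof.
case=> V0 VB _ _ Vx Vy; have Vy' : VG g (0 - y) by apply: VB.
by have := VB _ _ _ Vx Vy'; rewrite sub0r opprK.
Qed.

(* A finite family of homogeneous elements of an additively closed set U can
   be regrouped degree by degree into a decomposition with distinct degrees;
   this is how gradedness of a submodule is verified. *)
Lemma merge_decomp (G : eqType) (V : zmodType) (VG : G -> V -> Prop)
    (U : V -> Prop) (l : seq (G * V)) :
  is_grading VG -> U 0 -> (forall x y, U x -> U y -> U (x + y)) ->
  (forall p, p \in l -> VG p.1 p.2 /\ U p.2) ->
  exists (s : seq G) (a : G -> V),
     uniq s /\ (forall g, g \in s -> VG g (a g) /\ U (a g)) /\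
     \sum_(p <- l) p.2 = \sum_(g <- s) a g.
Proof.
move=> Hgr U0 UD; elim: l => [|[g b] l IH] Hl.
  by exists [::], (fun _ => 0); rewrite !big_nil.
have [s [a [us [Ha Hsum]]]] : exists (s : seq G) (a : G -> V),
     uniq s /\ (forall g, g \in s -> VG g (a g) /\ U (a g)) /\
     \sum_(p <- l) p.2 = \sum_(g <- s) a g.
  by apply: IH => p pl; apply: Hl; rewrite inE pl orbT.
have [Vb Ub] : VG g b /\ U b by apply: (Hl (g, b)); rewrite inE eqxx.
rewrite big_cons /= Hsum; case gs : (g \in s).
- exists s, (fun h => if h == g then a g + b else a h); split => //; split.
    move=> h hs; case: eqP => [->|_]; last exact: Ha.
    by have [Vag Uag] := Ha g gs; split; [apply: grading_add | apply: UD].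
  rewrite (bigD1_seq g gs us) (bigD1_seq g gs us) /= eqxx addrA [b + _]addrC.
  by congr (_ + _); apply: eq_bigr => h /negbTE ->.
- exists (g :: s), (fun h => if h == g then b else a h); split; first by rewrite /= gs.
  split; first by move=> h; rewrite inE; case: eqP => [->|_] //= hs; exact: Ha.
  rewrite big_cons eqxx; congr (_ + _); apply: eq_big_seq => h hs.
  by case: eqP => // hg; rewrite hg gs in hs.
Qed.

Lemma graded_ext (G : eqType) (R : comNzRingType) (M : lmodType R)
    (MG : G -> M -> Prop) (A B : M -> Prop) :
  (forall x, A x <-> B x) -> graded_submodule MG A -> graded_submodule MG B.
Proof.
move=> E [[A0 AD AZ] Adec]; split; first split.
- exact/E.
- by move=> x y /E Ax /E Ay; apply/E; apply: AD.
- by move=> r x /E Ax; apply/E; apply: AZ.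
move=> x /E /Adec [s [a [us [Ha ->]]]]; exists s, a; split => //; split => //.
by move=> g gs; have [? ?] := Ha g gs; split => //; apply/E.
Qed.

Lemma weak_ext (G : eqType) (R : comNzRingType) (RG : G -> R -> Prop)
    (M : lmodType R) (MG : G -> M -> Prop) (A B : M -> Prop) :
  (forall x, A x <-> B x) ->
  gr_weakly_Jsemiprime RG MG A -> gr_weakly_Jsemiprime RG MG B.
Proof.
move=> E [HA [x nAx] Hw]; split; first exact: graded_ext HA.
  by exists x => /E.
move=> r m n Hr Hm Hn Hnz /E HA'; have [u [j [Au [Jj ->]]]] := Hw r m n Hr Hm Hn Hnz HA'.
by exists u, j; split => //; apply/E.
Qed.

Section GradedModules.
Variables (G : eqType) (op : G -> G -> G) (R : comNzRingType) (RG : G -> R -> Prop).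
Hypothesis HR : graded_ring op RG.

Lemma graded_module_self : @graded_module G op R RG R^o RG.
Proof. by case: HR. Qed.

Variables (M : lmodType R) (MG : G -> M -> Prop).
Hypothesis HM : graded_module op RG MG.

Lemma scale_homog_ind (V : M -> Prop) (r : R) :
  submodule V -> (forall m, homog MG m -> V (r *: m)) -> forall m, V (r *: m).
Proof.
move=> HV Vr m; case: HM => [[_ _ Mdec _] _]; have [s [a [_ [Ha ->]]]] := Mdec m.
rewrite scaler_sumr big_seq; apply: submod_sum => // g gs.
by apply: Vr; exists g; apply: Ha.
Qed.

Lemma homog_scale (r : R) (m : M) : homogR RG r -> homog MG m -> homog MG (r *: m).
Proof. by case: HM => _ HMmul [g Hr] [h Hm]; exists (op g h); apply: HMmul. Qed.

(* X + R a is graded when X is graded and a is homogeneous: the homogeneous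
   components of x in X and of c a (for those of c) are regrouped by degree. *)
Lemma graded_plus_cyclic (X : M -> Prop) (a : M) :
  graded_submodule MG X -> homog MG a -> graded_submodule MG (plus_set X (cyclic a)).
Proof.
case: HR => [[_ _ Rdec _] _]; case: HM => [HMg HMmul] [[X0 XD XZ] Xdec] [da Ha].
have HW := plus_submodule (And3 X0 XD XZ) (cyclic_submodule a).
split => // _ [x [_ [Xx [[c ->] ->]]]].
have [s1 [a1 [_ [Ha1 ->]]]] := Xdec x Xx; have [s2 [c2 [_ [Hc2 ->]]]] := Rdec c.
have Hl : forall p, p \in [seq (g, a1 g) | g <- s1] ++ [seq (op g da, c2 g *: a) | g <- s2] ->
    MG p.1 p.2 /\ plus_set X (cyclic a) p.2.
  move=> p; rewrite mem_cat => /orP [/mapP [g gs ->]|/mapP [g gs ->]] /=.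
    have [Ma1 Xa1] := Ha1 g gs; split => //; exists (a1 g), 0.
    by split; [|split; [exists 0; rewrite scale0r|rewrite addr0]].
  split; first exact: HMmul (Hc2 g gs) Ha.
  by exists 0, (c2 g *: a); split => //; split; [exists (c2 g)|rewrite add0r].
have [W0 WD _] := HW; have [s [b [us [Hb Hs]]]] := merge_decomp HMg W0 WD Hl.
by exists s, b; split => //; split => //; rewrite -Hs big_cat !big_map /= scaler_suml.
Qed.

Lemma cyclic_graded (m : M) : homog MG m -> graded_submodule MG (cyclic m).
Proof.
move=> Hm.
have H0 : graded_submodule MG (fun y => y = 0).
  split; first by split=> [|_ _ -> ->|r _ ->]; rewrite ?addr0 ?scaler0.
  by move=> _ ->; exists [::], (fun _ => 0); rewrite big_nil.
apply: graded_ext (graded_plus_cyclic H0 Hm) => y; split.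
  by move=> [_ [j [-> [Cj ->]]]]; rewrite add0r.
by move=> Cy; exists 0, y; rewrite add0r.
Qed.

(* If t and a are homogeneous and t^n a = 0, then t a lies in J_gr(M): for a
   Gr-maximal X not containing t a, X + R (t a) = M writes a = x + c t a, so
   a - (c t)^n a lies in X while (c t)^n a = 0. *)
Lemma nilpotent_scale_Jgr (t : R) (a : M) (n : nat) :
  homogR RG t -> homog MG a -> t ^+ n *: a = 0 -> Jgr MG (t *: a).
Proof.
case: HM => [_ HMmul] [dt Ht] [da Ha] Hn.
move=> X [HX _ Xmax]; have [[X0 XD XZ] _] := HX.
pose W := plus_set X (cyclic (t *: a)).
have HW : graded_submodule MG W.
  by apply: graded_plus_cyclic => //; exists (op dt da); apply: HMmul.
have XW : forall x, X x -> W x.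
  by move=> x Xx; exists x, 0; split => //; split; [exists 0; rewrite scale0r|rewrite addr0].
case: (Xmax W HW XW) => [E|Wall].
  by apply/E; exists 0, (t *: a); split => //; split; [exists 1; rewrite scale1r|rewrite add0r].
have [x [_ [Xx [[c ->] Hxa]]]] := Wall a.
have Xpow : forall i, X (a - (c * t) ^+ i *: a).
  elim=> [|i IH]; first by rewrite expr0 scale1r subrr.
  have -> : a - (c * t) ^+ i.+1 *: a =
      (a - (c * t) ^+ i *: a) + (c * t) ^+ i *: (a - (c * t) *: a).
    by rewrite scalerBr scalerA -exprSr addrA subrK.
  apply: XD => //; apply: XZ.
  by have -> : a - (c * t) *: a = x by rewrite -scalerA {1}Hxa addrK.
by move: (Xpow n); rewrite exprMn -scalerA Hn scaler0 subr0 => /(XZ t).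
Qed.

End GradedModules.

Section Nakayama.
Variables (R : comNzRingType) (M : lmodType R) (Q : R -> Prop).
Hypothesis HQ : ideal Q.

(* The last generator is eliminated
   by multiplying through by u = v - q_nn. *)
Lemma determinant_trick (n : nat) (a : 'I_n -> M) (v : R) (q : 'I_n -> 'I_n -> R) :
  Q (1 - v) -> (forall i j, Q (q i j)) ->
  (forall i, v *: a i = \sum_j q i j *: a j) ->
  exists w, Q (1 - w) /\ forall i, w *: a i = 0.
Proof.
have [Q0 QD QM] := HQ.
elim: n a v q => [|n IH] a v q Qv Qq Ha; first by exists 1; split; [rewrite subrr | case].
pose mx := @ord_max n; pose w (j : 'I_n) := widen_ord (leqnSn n) j.
pose u := v - q mx mx.
have Qu : Q (1 - u).
  have -> : 1 - u = (1 - v) + q mx mx by rewrite /u; ring.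
  exact: QD.
have Hmax : u *: a mx = \sum_(j < n) q mx (w j) *: a (w j).
  by rewrite /u scalerBl Ha big_ord_recr /= addrK.
pose q' (i j : 'I_n) := u * q (w i) (w j) + q (w i) mx * q mx (w j).
have Qv' : Q (1 - u * v).
  have -> : 1 - u * v = (1 - u) + u * (1 - v) by ring.
  by apply: QD => //; apply: QM.
have Qq' : forall i j, Q (q' i j) by move=> i j; apply: QD; apply: QM.
have Ha' : forall i, (u * v) *: a (w i) = \sum_j q' i j *: a (w j).
  move=> i; rewrite -scalerA Ha big_ord_recr /= scalerDr.
  rewrite [u *: (_ *: a ord_max)]scalerA [u * _]mulrC -scalerA -/mx Hmax !scaler_sumr.
  by rewrite -big_split /=; apply: eq_bigr => j _; rewrite /q' !scalerA scalerDl.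
have [w' [Qw' Hw'a]] := IH (fun j => a (w j)) (u * v) q' Qv' Qq' Ha'.
exists (w' * u); split.
  have -> : 1 - w' * u = (1 - w') + w' * (1 - u) by ring.
  by apply: QD => //; apply: QM.
move=> i; case: (unliftP mx i) => [j ->|->].
  have -> : lift mx j = w j by apply: val_inj; exact: lift_max.
  by rewrite mulrC -scalerA Hw'a scaler0.
rewrite -scalerA Hmax scaler_sumr big1 // => j _.
by rewrite scalerA mulrC -scalerA Hw'a scaler0.
Qed.

Lemma faithful_nakayama (n : nat) (a : 'I_n -> M) :
  (forall x : M, exists c : 'I_n -> R, x = \sum_i c i *: a i) -> faithful M ->
  (forall i, idealM Q (a i)) -> Q 1.
Proof.
move=> Hgen Hfaith QMa; have [Q0 QD QM] := HQ.
pose Qcomb y := exists row : 'I_n -> R, (forall j, Q (row j)) /\ y = \sum_j row j *: a j.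
have QMcomb : forall y, idealM Q y -> Qcomb y.
  move=> y; apply: idealM_least.
    split.
    - by exists (fun _ => 0); split => //; rewrite big1 // => j _; rewrite scale0r.
    - move=> _ _ [r1 [Q1 ->]] [r2 [Q2 ->]]; exists (fun j => r1 j + r2 j); split.
        by move=> j; apply: QD.
      by rewrite -big_split; apply: eq_bigr => j _; rewrite scalerDl.
    - move=> c _ [r1 [Q1 ->]]; exists (fun j => c * r1 j); split; first by move=> j; apply: QM.
      by rewrite scaler_sumr; apply: eq_bigr => j _; rewrite scalerA.
  move=> r m Qr; have [c ->] := Hgen m; exists (fun j => r * c j); split.
    by move=> j; apply: ideal_mulr.
  by rewrite scaler_sumr; apply: eq_bigr => j _; rewrite scalerA.
have /all_sig [q Hq] : forall i, {row : 'I_n -> R | (forall j, Q (row j)) /\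
    1 *: a i = \sum_j row j *: a j}.
  move=> i; apply: cid; have [row [Qrow ->]] := QMcomb _ (QMa i).
  by exists row; rewrite scale1r.
have [w [Qw wa]] := determinant_trick (v := 1) (ltac:(by rewrite subrr))
  (fun i => proj1 (Hq i)) (fun i => proj2 (Hq i)).
suff w0 : w = 0 by rewrite w0 subr0 in Qw.
apply: Hfaith => m; have [c ->] := Hgen m.
by rewrite scaler_sumr big1 // => j _; rewrite scalerA mulrC -scalerA wa scaler0.
Qed.

End Nakayama.

Section MaximalIdeals.
Local Open Scope classical_set_scope.
Variables (R : comNzRingType) (I : R -> Prop).

Definition proper_ideal_over (A : R -> Prop) : Prop :=
  [/\ ideal A, forall x, I x -> A x & ~ A 1].

(* The family to which Zorn's lemma is applied: the empty set (the union of
   the empty chain) together with the proper ideals over I. *)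
Definition empty_or_proper (A : set R) : Prop :=
  (exists x, A x) -> proper_ideal_over A.

Lemma chain_union_proper (F : set (set R)) :
  F `<=` empty_or_proper -> total_on F subset ->
  empty_or_proper (\bigcup_(A in F) A).
Proof.
move=> FP Ftot [x [X FX Xx]].
have common : forall A B y z, F A -> F B -> A y -> B z -> exists C, [/\ F C, C y & C z].
  move=> A B y z FA FB Ay Bz; case: (Ftot _ _ FA FB) => AB.
    by exists B; split => //; apply: AB.
  by exists A; split => //; apply: AB.
have [[X0 _ _] IX _] := FP X FX (ex_intro _ x Xx); split.
- split; first by exists X.
  + move=> y z [A FA Ay] [B FB Bz]; have [C [FC Cy Cz]] := common _ _ _ _ FA FB Ay Bz.
    by exists C => //; have [[_ CD _] _ _] := FP C FC (ex_intro _ y Cy); apply: CD.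
  + move=> r y [A FA Ay]; exists A => //.
    by have [[_ _ AM] _ _] := FP A FA (ex_intro _ y Ay); apply: AM.
- by move=> y Iy; exists X => //; apply: IX.
- by case=> A FA A1; have [_ _ nA1] := FP A FA (ex_intro _ 1 A1).
Qed.

Lemma exists_maximal_ideal :
  ideal I -> ~ I 1 -> exists Q : R -> Prop, proper_ideal_over Q /\
    forall k, ~ Q k -> exists q c, Q q /\ 1 = q + c * k.
Proof.
move=> HI nI1.
have [Q [PQ Qmax]] := Zorn_bigcup chain_union_proper.
have [HQ IQ nQ1] : proper_ideal_over Q.
  apply: PQ; apply: contrapT => Qempty; apply: (Qmax I); last by move=> _; split.
  split; first by move=> y Qy; case: Qempty; exists y.
  by move=> IQ; apply: Qempty; exists 0; apply: IQ; case: HI.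
exists Q; split => // k nQk; have [Q0 QD QM] := HQ.
pose B y := exists q c, Q q /\ y = q + c * k.
apply: contrapT => nB1; apply: (Qmax B).
  split; first by move=> y Qy; exists y, 0; rewrite mul0r addr0.
  by move=> BQ; apply: nQk; apply: BQ; exists 0, 1; rewrite mul1r add0r.
move=> _; split.
- split.
  + by exists 0, 0; rewrite mul0r addr0.
  + move=> _ _ [q [c [Qq ->]]] [q' [c' [Qq' ->]]]; exists (q + q'), (c + c').
    by split; [apply: QD | ring].
  + move=> r _ [q [c [Qq ->]]]; exists (r * q), (r * c).
    by split; [apply: QM | ring].
- by move=> y Iy; exists y, 0; split; [apply: IQ | rewrite mul0r addr0].
- exact: nB1.
Qed.

End MaximalIdeals.

Section Cancellation.
Variables (G : eqType) (op : G -> G -> G) (R : comNzRingType) (RG : G -> R -> Prop).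
Variables (M : lmodType R) (MG : G -> M -> Prop).
Hypotheses (HR : graded_ring op RG) (HM : graded_module op RG MG).
Hypotheses (Hfaith : faithful M) (Hmult : gr_multiplication RG MG).
Variable Q : R -> Prop.
Hypotheses (HQ : ideal Q) (Qmax : forall k, ~ Q k -> exists q c, Q q /\ 1 = q + c * k).

(* If a homogeneous m lies outside Q M for a maximal ideal Q, then some
   q in Q satisfies (1 - q) M <= R m: write R m = K' M, pick k in K' \ Q
   and 1 = q + c k; then (1 - q) M = c k M <= K' M. *)
Lemma cyclic_absorbs (m : M) :
  homog MG m -> ~ idealM Q m ->
  exists q, Q q /\ forall m' : M, exists d, (1 - q) *: m' = d *: m.
Proof.
move=> Hm nQm; have [K' [_ E]] := Hmult (cyclic_graded HR HM Hm).
have [k [K'k nQk]] : exists k, K' k /\ ~ Q k.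
  apply: contrapT => nex; apply: nQm.
  have : idealM K' m by apply/E; exists 1; rewrite scale1r.
  by apply: idealM_mono => r K'r; apply: contrapT => nQr; apply: nex; exists r.
have [q [c [Qq Hqc]]] := Qmax nQk; exists q; split => // m'.
have /E [d Hd] : idealM K' (k *: m') by apply: idealM1.
exists (c * d); rewrite -scalerA -Hd scalerA; congr (_ *: _); rewrite Hqc; ring.
Qed.

(* With such a q, the ideal (K : x) of those c with c x in K cannot lie in
   Q when x M <= K M: writing (1 - q) x m = k0 m with k0 in K, the element
   z = (1 - q) x - k0 kills m, hence (1 - q) M, so z (1 - q) = 0 by
   faithfulness and (1 - q)^2 x lies in K. *)
Lemma cyclic_absorbs_colon (K : R -> Prop) (x q : R) (m : M) :
  ideal K -> (forall m' : M, idealM K (x *: m')) -> (forall c, K (c * x) -> Q c) ->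
  Q q -> (forall m' : M, exists d, (1 - q) *: m' = d *: m) -> Q 1.
Proof.
move=> HK Hx KQ Qq Hcyc; have [Q0 QD QM] := HQ; have [K0 KD KM] := HK.
have [N [r [ms [Kr Hsum]]]] := Hx m.
have /all_sig [d Hd] : forall i, {d | (1 - q) *: ms i = d *: m} by move=> i; apply: cid.
pose k0 := \sum_i r i * d i.
have Kk0 : K k0 by apply: ideal_sum => // i _; apply: ideal_mulr.
have Hk0 : (1 - q) *: (x *: m) = k0 *: m.
  rewrite Hsum scaler_sumr /k0 scaler_suml; apply: eq_bigr => i _.
  by rewrite -(scalerA (r i) (d i)) -Hd !scalerA mulrC.
pose z := (1 - q) * x - k0.
have zm : z *: m = 0 by rewrite /z scalerBl -scalerA Hk0 subrr.
have z0 : z * (1 - q) = 0.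
  apply: Hfaith => m'; rewrite -scalerA; have [d' ->] := Hcyc m'.
  by rewrite scalerA mulrC -scalerA zm scaler0.
have Qq2 : Q ((1 - q) * (1 - q)).
  apply: KQ; have -> : (1 - q) * (1 - q) * x = z * (1 - q) + (1 - q) * k0 by rewrite /z; ring.
  by rewrite z0 add0r; apply: KM.
have -> : (1 : R) = (1 - q) * (1 - q) + (1 + 1 - q) * q by ring.
by apply: QD => //; apply: QM.
Qed.

End Cancellation.

(* Otherwise a maximal ideal Q contains (K : x); Q M = M is excluded by
   Nakayama and Q M <> M by the two lemmas above. *)
Lemma cancellation (G : eqType) (op : G -> G -> G) (R : comNzRingType)
    (RG : G -> R -> Prop) (M : lmodType R) (MG : G -> M -> Prop)
    (K : R -> Prop) (x : R) :
  graded_ring op RG -> graded_module op RG MG -> gr_fin_gen MG -> faithful M ->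
  gr_multiplication RG MG -> ideal K -> (forall m : M, idealM K (x *: m)) -> K x.
Proof.
move=> HR HM Hfg Hfaith Hmult HK Hx; apply: contrapT => nKx; have [K0 KD KM] := HK.
pose I c := K (c * x).
have HI : ideal I.
  split; rewrite /I; first by rewrite mul0r.
    by move=> a b Ia Ib; rewrite mulrDl; apply: KD.
  by move=> r a Ia; rewrite -mulrA; apply: KM.
have nI1 : ~ I 1 by rewrite /I mul1r.
have [Q [[HQ IQ nQ1] Qmax]] := exists_maximal_ideal HI nI1; apply: nQ1.
have [Qall | /existsNP [m /not_implyP [Hm nQm]]] :=
  pselect (forall m, homog MG m -> idealM Q m); last first.
  have [q [Qq Hcyc]] := cyclic_absorbs HR HM Hmult Qmax Hm nQm.
  exact: (cyclic_absorbs_colon Hfaith HQ HK Hx IQ Qq Hcyc).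
have [n [a [Ha Hgen]]] := Hfg.
by apply: (faithful_nakayama HQ Hgen Hfaith) => i; apply: Qall.
Qed.

Section Transport.
Variables (G : eqType) (op : G -> G -> G) (R : comNzRingType) (RG : G -> R -> Prop).
Variables (M : lmodType R) (MG : G -> M -> Prop).
Hypotheses (HR : graded_ring op RG) (HM : graded_module op RG MG).
Hypotheses (Hfg : gr_fin_gen MG) (Hfaith : faithful M) (Hmult : gr_multiplication RG MG).
Hypothesis HJ : forall x : M, Jgr MG x <-> idealM (JgrR RG) x.
Variables (U : M -> Prop) (K : R -> Prop).
Hypotheses (HU : graded_submodule MG U) (HK : graded_ideal RG K).
Hypothesis HUK : forall x : M, U x <-> idealM K x.

Lemma graded_ideal_ideal : ideal K.
Proof. exact/ideal_submoduleE/(proj1 HK). Qed.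

Lemma JgrR_ideal : ideal (JgrR RG).
Proof. exact/ideal_submoduleE/Jgr_submodule. Qed.

Lemma JgrR_scale (r : R) (m : M) : JgrR RG r -> Jgr MG (r *: m).
Proof. by move=> Jr; apply/HJ; apply: idealM1. Qed.

Lemma UJ_submodule : submodule (plus_set U (Jgr MG)).
Proof. exact: plus_submodule (proj1 HU) (Jgr_submodule MG). Qed.

Lemma colon_idealM (r : R) : colon U r <-> K r.
Proof.
split=> [Ur | Kr m]; last by apply/HUK; apply: idealM1.
apply: (cancellation HR HM Hfg Hfaith Hmult graded_ideal_ideal) => m; exact/HUK.
Qed.

(* For
   homogeneous r, s with r^n s in K, every r s m lies in U + J_gr(M)
   (homogeneous m suffice), and U + J_gr(M) <= (K + J_gr(R)) M, so
   r s is in K + J_gr(R) by cancellation. *)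
Lemma weakly_ideal_of_module :
  gr_weakly_Jsemiprime RG MG U -> gr_weakly_Jsemiprime_ideal RG K.
Proof.
case=> _ [x0 nUx0] Uw; split => //.
  by exists 1 => K1; apply: nUx0; apply/HUK; rewrite -[x0]scale1r; apply: idealM1.
move=> r s n Hr Hs Hn _ Ks.
have UJ : forall m, plus_set U (Jgr MG) ((r * s) *: m).
  apply: (scale_homog_ind HM UJ_submodule) => m Hm; rewrite -scalerA.
  have Hsm := homog_scale HM Hs Hm.
  have [Hz | Hnz] := eqVneq (r ^+ n *: (s *: m)) 0.
    exists 0, (r *: (s *: m)); split; first by case: HU => [[]].
    by split; [exact: (nilpotent_scale_Jgr HR HM Hr Hsm Hz) | rewrite add0r].
  by apply: (Uw r (s *: m) n) => //; apply/HUK; rewrite scalerA; apply: idealM1.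
have HKJ : ideal (plus_set K (JgrR RG)).
  by apply/ideal_submoduleE/plus_submodule; apply/ideal_submoduleE;
    [exact: graded_ideal_ideal | exact: JgrR_ideal].
apply: (cancellation HR HM Hfg Hfaith Hmult HKJ) => m.
apply: idealM_plus; [by case: graded_ideal_ideal | by case: JgrR_ideal |].
have [u [j [Uu [Jj ->]]]] := UJ m; exists u, j.
by split; [exact/HUK | split; [exact/HJ |]].
Qed.

(* The key step of (ii) => (i): if K is graded weakly J_gr-semiprime, r and
   k are homogeneous and r^n k is in K, then r k M <= U + J_gr(M), whether
   r^n k vanishes (then r k is in J_gr(R)) or not. *)
Lemma weakly_scale_UJ (r k : R) (n : nat) :
  gr_weakly_Jsemiprime_ideal RG K -> homogR RG r -> @homog G R R^o RG k ->
  (0 < n)%N -> K (r ^+ n * k) -> forall m, plus_set U (Jgr MG) ((r * k) *: m).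
Proof.
move=> [_ _ Kw] Hr Hk Hn Kk m; have [U0 _ _] := proj1 HU.
have [Hz | Hnz] := eqVneq (r ^+ n * k) 0.
  exists 0, ((r * k) *: m); split => //; split; last by rewrite add0r.
  by apply: JgrR_scale; apply: (nilpotent_scale_Jgr HR (graded_module_self HR) Hr Hk Hz).
have [u [j [Ku [Jj Erk]]]] := Kw r k n Hr Hk Hn Hnz Kk.
rewrite (Erk : r * k = u + j) scalerDl; exists (u *: m), (j *: m).
by split; [apply/HUK; apply: idealM1 | split; [apply: JgrR_scale |]].
Qed.

(* (ii) => (i): for homogeneous r, m with r^n m in U write R m = K' M; each
   homogeneous k in K' has r^n k M <= R r^n m <= U, i.e. r^n k in K, so
   r k M <= U + J_gr(M); decomposing K' into homogeneous components gives
   r m in r K' M <= U + J_gr(M). *)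
Lemma weakly_module_of_ideal :
  gr_proper U -> gr_weakly_Jsemiprime_ideal RG K -> gr_weakly_Jsemiprime RG MG U.
Proof.
move=> Uprop Kw; split => // r m n Hr Hm Hn _ Urm; have [_ _ UZ] := proj1 HU.
have [K' [[_ K'dec] E]] := Hmult (cyclic_graded HR HM Hm).
have K'UJ : forall k, K' k -> forall m', plus_set U (Jgr MG) ((r * k) *: m').
  move=> k /K'dec [s [a [_ [Ha ->]]]] m'.
  rewrite mulr_sumr scaler_suml big_seq; apply: submod_sum UJ_submodule _ => g gs.
  have [Hag K'ag] := Ha g gs; apply: (weakly_scale_UJ Kw Hr (ex_intro _ g Hag) Hn).
  apply/colon_idealM => m''; have /E [d Hd] : idealM K' (a g *: m'') by apply: idealM1.
  by rewrite -scalerA Hd scalerA mulrC -scalerA; apply: UZ.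
have /E [N [k [ms [K'k ->]]]] : exists c, m = c *: m by exists 1; rewrite scale1r.
rewrite scaler_sumr; apply: submod_sum UJ_submodule _ => i _.
by rewrite scalerA; apply: K'UJ.
Qed.

End Transport.

Theorem mainTheorem17
  (G : eqType) (op : G -> G -> G) (e : G) (inv : G -> G)
  (R : comNzRingType) (RG : G -> R -> Prop)
  (M : lmodType R) (MG : G -> M -> Prop)
  (U : M -> Prop) :
  is_group op e inv ->
  graded_ring op RG ->
  graded_module op RG MG ->
  gr_fin_gen MG ->
  faithful M ->
  gr_multiplication RG MG ->
  graded_submodule MG U -> gr_proper U ->
  (forall x : M, Jgr MG x <-> idealM (JgrR RG) x) ->
  (gr_weakly_Jsemiprime RG MG U <->
     gr_weakly_Jsemiprime_ideal RG (colon U)) /\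
  (gr_weakly_Jsemiprime_ideal RG (colon U) <->
     exists L : R -> Prop, gr_weakly_Jsemiprime_ideal RG L /\
       forall x : M, U x <-> idealM L x).
Proof.
move=> _ HR HM Hfg Hfaith Hmult HU Uprop HJ.
have [K [HK HUK]] := Hmult U HU.
have colonK := colon_idealM HR HM Hfg Hfaith Hmult HK HUK.
have weakly_UK : gr_weakly_Jsemiprime RG MG U <-> gr_weakly_Jsemiprime_ideal RG K.
  split; first exact: (weakly_ideal_of_module HR HM Hfg Hfaith Hmult HJ HU HK HUK).
  exact: (weakly_module_of_ideal HR HM Hfg Hfaith Hmult HJ HU HK HUK Uprop).
have weakly_colonK :
    gr_weakly_Jsemiprime_ideal RG (colon U) <-> gr_weakly_Jsemiprime_ideal RG K.
  by split; apply: weak_ext => r; [apply: colonK | apply: iff_sym].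
split; first by split=> [/weakly_UK/weakly_colonK | /weakly_colonK/weakly_UK].
split=> [weakly_colon | [L [weakly_L HUL]]].
  exists (colon U); split=> // x; apply: iff_trans (HUK x) _.
  by apply: idealM_ext => r; apply: iff_sym.
have [HL _ _] := weakly_L; apply: weak_ext weakly_L => r.
exact: iff_sym (colon_idealM HR HM Hfg Hfaith Hmult HL HUL r).
Qed.
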